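(* Let $(\mathcal M,\circ,I,\bullet,J)$ be a duoidal category in which idempotent morphisms split, let $A$ be a right weak bimonoid in it, and let $\sqcap^R_\circ=\iota^R_\circ\cdot\pi^R_\circ$ be a splitting of the idempotent $\sqcap^R_\circ:J\circ A\to J\circ A$ through $R_\circ$. Then $R_\circ$ is a $J$-$A$ bimodule in $(\mathcal M,\circ,I)$ (where $J$ is the monoid $(J,\varpi,\tau)$ and $A$ the monoid $(A,\mu,\eta)$), with right $A$-action $\pi^R_\circ\cdot(J\circ\mu)\cdot(\iota^R_\circ\circ A):R_\circ\circ A\to R_\circ$ and left $J$-action $\pi^R_\circ\cdot(\varpi\circ A)\cdot(J\circ\iota^R_\circ):J\circ R_\circ\to R_\circ$.
   Context: Composition of morphisms is written $g\cdot f$ ($f$ first). Associativity and unit isomorphisms of both monoidal products are suppressed. A duoidal category $(\mathcal M,\circ,I,\bullet,J)$ is a category $\mathcal M$ with two monoidal structures $(\circ,I)$ and $(\bullet,J)$, morphisms $\delta:I\to I\bullet I$, $\varpi:J\circ J\to J$, $\tau:I\to J$, and a natural transformation $\zeta_{A,B,C,D}:(A\bullet B)\circ(C\bullet D)\to(A\circ C)\bullet(B\circ D)$ such that: $(J,\varpi,\tau)$ is a monoid in $(\mathcal M,\circ,I)$; $(I,\delta,\tau)$ is a comonoid in $(\mathcal M,\bullet,J)$; for all objects, $\zeta_{A,B,C\circ E,D\circ F}\cdot((A\bullet B)\circ\zeta_{C,D,E,F})=\zeta_{A\circ C,B\circ D,E,F}\cdot(\zeta_{A,B,C,D}\circ(E\bullet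 F))$ and $((A\circ D)\bullet\zeta_{B,C,E,F})\cdot\zeta_{A,B\bullet C,D,E\bullet F}=(\zeta_{A,B,D,E}\bullet(C\circ F))\cdot\zeta_{A\bullet B,C,D\bullet E,F}$; and $\zeta_{I,I,A,B}\cdot(\delta\circ(A\bullet B))=\mathrm{id}=\zeta_{A,B,I,I}\cdot((A\bullet B)\circ\delta)$, $(\varpi\bullet(A\circ B))\cdot\zeta_{J,A,J,B}=\mathrm{id}=((A\circ B)\bullet\varpi)\cdot\zeta_{A,J,B,J}$. A right weak bimonoid is an object $A$ with a monoid structure $(\mu,\eta)$ in $(\mathcal M,\circ,I)$ and a comonoid structure $(\Delta,\varepsilon)$ in $(\mathcal M,\bullet,J)$ satisfying, with $e:=\Delta\cdot\eta$ and $\bar\mu:=\varepsilon\cdot\mu$: (WB) $\Delta\cdot\mu=(\mu\bullet\mu)\cdot\zeta_{A,A,A,A}\cdot(\Delta\circ\Delta)$. (RRU) $(I\bullet A\bullet\mu\bullet A)\cdot(\zeta_{I,A,I\bullet A,A}\bullet A)\cdot(((I\bullet A)\circ(I\bullet e))\bullet A)\cdot(((I\bullet A)\circ\delta)\bullet A)\cdot(I\bullet e)\cdot\delta=(I\bullet A\bullet\Delta)\cdot(I\bullet\Delta)\cdot(I\bullet\eta)\cdot\delta$. (LRU) $(A\bullet\mu\bullet A\bullet I)\cdot(A\bullet\zeta_{A,I,A,A\bullet I})\cdot(A\bullet((A\bullet I)\circ(e\bullet I)))\cdot(A\bullet((A\bullet I)\circ\delta))\cdot(e\bullet I)\cdot\delta=(\Delta\bullet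 A\bullet I)\cdot(\Delta\bullet I)\cdot(\eta\bullet I)\cdot\delta$. (LRC) $\varpi\cdot(J\circ\bar\mu)\cdot((\varpi\bullet(J\circ A))\circ A)\cdot(((J\circ\bar\mu)\bullet(J\circ A))\circ A)\cdot(\zeta_{J\circ A,J,A,A}\circ A)\cdot(J\circ A\circ\Delta\circ A)=\varpi\cdot(J\circ\varepsilon)\cdot(J\circ\mu)\cdot(J\circ A\circ\mu)$. (LLC) $\varpi\cdot(J\circ\bar\mu)\cdot(((J\circ A)\bullet\varpi)\circ A)\cdot(((J\circ A)\bullet(J\circ\bar\mu))\circ A)\cdot(\zeta_{J,J\circ A,A,A}\circ A)\cdot(J\circ A\circ\Delta\circ A)=\varpi\cdot(J\circ\varepsilon)\cdot(J\circ\mu)\cdot(J\circ A\circ\mu)$. The morphism $\sqcap^R_\circ:=((J\circ A)\bullet\varpi)\cdot((J\circ A)\bullet(J\circ\bar\mu))\cdot\zeta_{J,J\circ A,A,A}\cdot(J\circ A\circ e):J\circ A\to J\circ A$ (where $J\circ A\circ(A\bullet A)$ is read as $(J\bullet(J\circ A))\circ(A\bullet A)$) is idempotent; it is split as $\sqcap^R_\circ=\iota^R_\circ\cdot\pi^R_\circ$ with $\pi^R_\circ:J\circ A\to R_\circ$, $\iota^R_\circ:R_\circ\to J\circ A$, $\pi^R_\circ\cdot\iota^R_\circ=\mathrm{id}$. *)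

(* Monoidal structures are NOT assumed strict: associators and unitors are
   explicit, and every formula of the paper is written with them inserted. *)

Set Implicit Arguments.
Unset Strict Implicit.

Record CatData := {
  Ob :> Type;
  Hom : Ob -> Ob -> Type;
  idm : forall X, Hom X X;
  comp : forall X Y Z, Hom Y Z -> Hom X Y -> Hom X Z }.
Arguments Hom {c} X Y.
Arguments idm {c} X.
Arguments comp {c X Y Z} g f.

(* g · f : f first, then g *)
Notation "g · f" := (comp g f) (at level 40, left associativity).

Record IsCategory (C : CatData) : Prop := {
  comp_assoc : forall (X Y Z W : C) (h : Hom Z W) (g : Hom Y Z) (f : Hom X Y),
      h · (g · f) = (h · g) · f;
  comp_idl : forall (X Y : C) (f : Hom X Y), idm Y · f = f;
  comp_idr : forall (X Y : C) (f : Hom X Y), f · idm X = f }.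

Record Category := { cat_data :> CatData; cat_ax : IsCategory cat_data }.

Definition idempotents_split (C : CatData) : Prop :=
  forall (X : C) (f : Hom X X), f · f = f ->
  exists (Y : C) (p : Hom X Y) (i : Hom Y X), i · p = f /\ p · i = idm Y.

Record MonData (C : CatData) := {
  tens : C -> C -> C;
  tensm : forall (A A' B B' : C), Hom A A' -> Hom B B' -> Hom (tens A B) (tens A' B');
  munit : C;
  assoc : forall A B X : C, Hom (tens A (tens B X)) (tens (tens A B) X);
  assoc_inv : forall A B X : C, Hom (tens (tens A B) X) (tens A (tens B X));
  lunit : forall A : C, Hom (tens munit A) A;
  lunit_inv : forall A : C, Hom A (tens munit A);
  runit : forall A : C, Hom (tens A munit) A;
  runit_inv : forall A : C, Hom A (tens A munit) }.
Arguments tens {C} m A B.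
Arguments tensm {C} m {A A' B B'} f g.
Arguments munit {C} m.
Arguments assoc {C} m A B X.
Arguments assoc_inv {C} m A B X.
Arguments lunit {C} m A.
Arguments lunit_inv {C} m A.
Arguments runit {C} m A.
Arguments runit_inv {C} m A.

Section MonoidalLaws.
Context {C : CatData} (M : MonData C).
Local Notation "A ⊗ B" := (tens M A B) (at level 30, right associativity).
Local Notation "f ⊠ g" := (tensm M f g) (at level 30, right associativity).
Local Notation a := (assoc M).
Local Notation ai := (assoc_inv M).
Local Notation l := (lunit M).
Local Notation li := (lunit_inv M).
Local Notation r := (runit M).
Local Notation ri := (runit_inv M).
Local Notation U := (munit M).

Record IsMonoidal : Prop := {
  tens_id : forall A B : C, idm A ⊠ idm B = idm (A ⊗ B);
  tens_comp : forall (A A' A'' B B' B'' : C) (f : Hom A A') (f' : Hom A' A'')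
      (g : Hom B B') (g' : Hom B' B''), (f' · f) ⊠ (g' · g) = (f' ⊠ g') · (f ⊠ g);
  assoc_iso1 : forall A B X : C, ai A B X · a A B X = idm _;
  assoc_iso2 : forall A B X : C, a A B X · ai A B X = idm _;
  assoc_nat : forall (A A' B B' X X' : C) (f : Hom A A') (g : Hom B B') (h : Hom X X'),
      a A' B' X' · (f ⊠ (g ⊠ h)) = ((f ⊠ g) ⊠ h) · a A B X;
  lunit_iso1 : forall A : C, li A · l A = idm _;
  lunit_iso2 : forall A : C, l A · li A = idm _;
  lunit_nat : forall (A A' : C) (f : Hom A A'), l A' · (idm U ⊠ f) = f · l A;
  runit_iso1 : forall A : C, ri A · r A = idm _;
  runit_iso2 : forall A : C, r A · ri A = idm _;
  runit_nat : forall (A A' : C) (f : Hom A A'), r A' · (f ⊠ idm U) = f · r A;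
  pentagon : forall A B X Y : C,
      a (A ⊗ B) X Y · a A B (X ⊗ Y)
      = (a A B X ⊠ idm Y) · a A (B ⊗ X) Y · (idm A ⊠ a B X Y);
  triangle : forall A B : C, (r A ⊠ idm B) · a A U B = idm A ⊠ l B }.

Definition is_monoid (X : C) (m : Hom (X ⊗ X) X) (u : Hom U X) : Prop :=
  m · (m ⊠ idm X) · a X X X = m · (idm X ⊠ m) /\
  m · (u ⊠ idm X) = l X /\
  m · (idm X ⊠ u) = r X.

Definition is_comonoid (X : C) (d : Hom X (X ⊗ X)) (c : Hom X U) : Prop :=
  a X X X · (idm X ⊠ d) · d = (d ⊠ idm X) · d /\
  l X · (c ⊠ idm X) · d = idm X /\
  r X · (idm X ⊠ c) · d = idm X.

Definition is_bimodule (L : C) (mL : Hom (L ⊗ L) L) (uL : Hom U L)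
    (B : C) (mB : Hom (B ⊗ B) B) (uB : Hom U B)
    (X : C) (lam : Hom (L ⊗ X) X) (rho : Hom (X ⊗ B) X) : Prop :=
  lam · (mL ⊠ idm X) · a L L X = lam · (idm L ⊠ lam) /\
  lam · (uL ⊠ idm X) = l X /\
  rho · (rho ⊠ idm B) · a X B B = rho · (idm X ⊠ mB) /\
  rho · (idm X ⊠ uB) = r X /\
  rho · (lam ⊠ idm B) · a L X B = lam · (idm L ⊠ rho).

End MonoidalLaws.
Arguments is_monoid {C} M X m u.
Arguments is_comonoid {C} M X d c.
Arguments is_bimodule {C} M {L} mL uL {B} mB uB {X} lam rho.

Record DuoData (C : CatData) := {
  mc : MonData C;
  mb : MonData C;
  delta : Hom (munit mc) (tens mb (munit mc) (munit mc));
  varpi : Hom (tens mc (munit mb) (munit mb)) (munit mb);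
  tau : Hom (munit mc) (munit mb);
  zeta : forall A B X Y : C,
      Hom (tens mc (tens mb A B) (tens mb X Y)) (tens mb (tens mc A X) (tens mc B Y)) }.
Arguments mc {C} d.
Arguments mb {C} d.
Arguments delta {C} d.
Arguments varpi {C} d.
Arguments tau {C} d.
Arguments zeta {C} d A B X Y.

Section DuoidalDefs.
Context {C : CatData} (D : DuoData C).
Local Notation "A ∘ B" := (tens (mc D) A B) (at level 30, right associativity).
Local Notation "f ⊚ g" := (tensm (mc D) f g) (at level 30, right associativity).
Local Notation "A • B" := (tens (mb D) A B) (at level 30, right associativity).
Local Notation "f ⊙ g" := (tensm (mb D) f g) (at level 30, right associativity).
Local Notation I := (munit (mc D)).
Local Notation J := (munit (mb D)).
Local Notation ac := (assoc (mc D)).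
Local Notation aci := (assoc_inv (mc D)).
Local Notation lc := (lunit (mc D)).
Local Notation rc := (runit (mc D)).
Local Notation rci := (runit_inv (mc D)).
Local Notation ab := (assoc (mb D)).
Local Notation abi := (assoc_inv (mb D)).
Local Notation lb := (lunit (mb D)).
Local Notation lbi := (lunit_inv (mb D)).
Local Notation rb := (runit (mb D)).
Local Notation rbi := (runit_inv (mb D)).
Local Notation zt := (zeta D).

Record IsDuoidal : Prop := {
  duo_mc : IsMonoidal (mc D);
  duo_mb : IsMonoidal (mb D);
  zeta_nat : forall (A A' B B' X X' Y Y' : C) (f : Hom A A') (g : Hom B B')
      (h : Hom X X') (k : Hom Y Y'),
      zt A' B' X' Y' · ((f ⊙ g) ⊚ (h ⊙ k)) = ((f ⊚ h) ⊙ (g ⊚ k)) · zt A B X Y;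
  J_monoid : is_monoid (mc D) J (varpi D) (tau D);
  I_comonoid : is_comonoid (mb D) I (delta D) (tau D);
  zeta_assoc_c : forall A B X Y E F : C,
      (ac A X E ⊙ ac B Y F) · zt A B (X ∘ E) (Y ∘ F) · (idm (A • B) ⊚ zt X Y E F)
      = zt (A ∘ X) (B ∘ Y) E F · (zt A B X Y ⊚ idm (E • F)) · ac (A • B) (X • Y) (E • F);
  zeta_assoc_b : forall A B X Y E F : C,
      ab (A ∘ Y) (B ∘ E) (X ∘ F) · (idm (A ∘ Y) ⊙ zt B X E F) · zt A (B • X) Y (E • F)
      = (zt A B Y E ⊙ idm (X ∘ F)) · zt (A • B) X (Y • E) F · (ab A B X ⊚ ab Y E F);
  zeta_delta_l : forall A B : C,
      (lc A ⊙ lc B) · zt I I A B · (delta D ⊚ idm (A • B)) = lc (A • B);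
  zeta_delta_r : forall A B : C,
      (rc A ⊙ rc B) · zt A B I I · (idm (A • B) ⊚ delta D) = rc (A • B);
  zeta_varpi_l : forall A B : C,
      lb (A ∘ B) · (varpi D ⊙ idm (A ∘ B)) · zt J A J B = lb A ⊚ lb B;
  zeta_varpi_r : forall A B : C,
      rb (A ∘ B) · (idm (A ∘ B) ⊙ varpi D) · zt A J B J = rb A ⊚ rb B }.

Section RWB.
Variables (A : C) (mu : Hom (A ∘ A) A) (eta : Hom I A)
          (Delta : Hom A (A • A)) (eps : Hom A J).

Definition e_of : Hom I (A • A) := Delta · eta.
Definition mubar : Hom (A ∘ A) J := eps · mu.

Local Notation e := e_of.
Local Notation mb_ := mubar.

Definition axiom_WB : Prop :=
  Delta · mu = (mu ⊙ mu) · zt A A A A · (Delta ⊚ Delta).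

Definition axiom_RRU : Prop :=
  abi I A (A • A) · abi (I • A) A A
  · ((idm (I • A) ⊙ mu) ⊙ idm A)
  · ((lc (I • A) ⊙ idm (A ∘ A)) ⊙ idm A)
  · (zt I A (I • A) A ⊙ idm A)
  · ((idm (I • A) ⊚ ab I A A) ⊙ idm A)
  · ((idm (I • A) ⊚ (idm I ⊙ e)) ⊙ idm A)
  · (((idm (I • A) ⊚ delta D) · rci (I • A)) ⊙ idm A)
  · ab I A A
  · (idm I ⊙ e)
  · delta D
  = (idm I ⊙ (idm A ⊙ Delta)) · (idm I ⊙ Delta) · (idm I ⊙ eta) · delta D.

Definition axiom_LRU : Prop :=
  ab (A • A) A I · ab A A (A • I)
  · (idm A ⊙ (mu ⊙ lc (A • I)))
  · (idm A ⊙ zt A I A (A • I))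
  · (idm A ⊙ (idm (A • I) ⊚ abi A A I))
  · (idm A ⊙ (idm (A • I) ⊚ (e ⊙ idm I)))
  · (idm A ⊙ ((idm (A • I) ⊚ delta D) · rci (A • I)))
  · abi A A I
  · (e ⊙ idm I)
  · delta D
  = ((Delta ⊙ idm A) ⊙ idm I) · (Delta ⊙ idm I) · (eta ⊙ idm I) · delta D.

Definition axiom_LRC : Prop :=
  varpi D · (idm J ⊚ mb_) · aci J A A
  · (lb (J ∘ A) ⊚ idm A)
  · ((varpi D ⊙ idm (J ∘ A)) ⊚ idm A)
  · ((((idm J ⊚ mb_) · aci J A A) ⊙ idm (J ∘ A)) ⊚ idm A)
  · (zt (J ∘ A) J A A ⊚ idm A)
  · ((rbi (J ∘ A) ⊚ idm (A • A)) ⊚ idm A)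
  · ((idm (J ∘ A) ⊚ Delta) ⊚ idm A)
  · ac (J ∘ A) A A · ac J A (A ∘ A)
  = varpi D · (idm J ⊚ eps) · (idm J ⊚ mu) · (idm J ⊚ (idm A ⊚ mu)).

Definition axiom_LLC : Prop :=
  varpi D · (idm J ⊚ mb_) · aci J A A
  · (rb (J ∘ A) ⊚ idm A)
  · ((idm (J ∘ A) ⊙ varpi D) ⊚ idm A)
  · ((idm (J ∘ A) ⊙ ((idm J ⊚ mb_) · aci J A A)) ⊚ idm A)
  · (zt J (J ∘ A) A A ⊚ idm A)
  · ((lbi (J ∘ A) ⊚ idm (A • A)) ⊚ idm A)
  · ((idm (J ∘ A) ⊚ Delta) ⊚ idm A)
  · ac (J ∘ A) A A · ac J A (A ∘ A)
  = varpi D · (idm J ⊚ eps) · (idm J ⊚ mu) · (idm J ⊚ (idm A ⊚ mu)).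

Definition right_weak_bimonoid : Prop :=
  is_monoid (mc D) A mu eta /\
  is_comonoid (mb D) A Delta eps /\
  axiom_WB /\ axiom_RRU /\ axiom_LRU /\ axiom_LRC /\ axiom_LLC.

(** The idempotent ⊓^R_∘ : J∘A -> J∘A, with the suppressed isomorphisms
    J∘A ≅ (J∘A)∘I, J∘A ≅ J•(J∘A), (J∘A)∘A ≅ J∘(A∘A), (J∘A)•J ≅ J∘A
    made explicit. *)
Definition sqcapR : Hom (J ∘ A) (J ∘ A) :=
  rb (J ∘ A)
  · (idm (J ∘ A) ⊙ varpi D)
  · (idm (J ∘ A) ⊙ ((idm J ⊚ mb_) · aci J A A))
  · zt J (J ∘ A) A A
  · (lbi (J ∘ A) ⊚ idm (A • A))
  · (idm (J ∘ A) ⊚ e)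
  · rci (J ∘ A).

Definition ractR (R : C) (piR : Hom (J ∘ A) R) (iotaR : Hom R (J ∘ A))
  : Hom (R ∘ A) R :=
  piR · (idm J ⊚ mu) · aci J A A · (iotaR ⊚ idm A).

End RWB.

Definition lactR (A R : C) (piR : Hom (J ∘ A) R) (iotaR : Hom R (J ∘ A))
  : Hom (J ∘ R) R :=
  piR · (varpi D ⊚ idm A) · ac J J A · (idm J ⊚ iotaR).

End DuoidalDefs.

Record Duoidal (C : CatData) := { duo_data :> DuoData C; duo_ax : IsDuoidal duo_data }.

(* The idempotent ⊓ := ⊓^R_∘ factors through the pairing ψ := ϖ·(J∘μ̄) : (J∘A)∘A → J
   ([varpi_mubar]): ⊓·h depends on h only through ψ·(h∘A).  Axiom (LLC) together
   with the unit law of A gives ψ·(⊓∘A) = ψ, and ψ is compatible with the free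
   actions λ of J and ρ of A on J∘A, so ⊓·λ·(J∘⊓) = ⊓·λ and ⊓·ρ·(⊓∘A) = ⊓·ρ.
   A retract of a bimodule along an idempotent absorbed in this way inherits the
   bimodule structure, and J∘A is a J-A bimodule for any two monoids J and A. *)

From Stdlib Require Import ssreflect ssrfun.
Set Implicit Arguments.
Unset Strict Implicit.

Section CategoryFacts.
Context {C : Category}.

Lemma compA (X Y Z W : C) (h : Hom Z W) (g : Hom Y Z) (f : Hom X Y) :
  h · (g · f) = h · g · f.
Proof. exact: (comp_assoc (cat_ax C)). Qed.

Lemma comp1f (X Y : C) (f : Hom X Y) : idm Y · f = f.
Proof. exact: (comp_idl (cat_ax C)). Qed.

Lemma compf1 (X Y : C) (f : Hom X Y) : f · idm X = f.
Proof. exact: (comp_idr (cat_ax C)). Qed.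

Lemma epi_of_section (X Y Z : C) (p : Hom X Y) (s : Hom Y X) (h k : Hom Y Z) :
  p · s = idm Y -> h · p = k · p -> h = k.
Proof. by move=> ps hk; rewrite -[h]compf1 -[k]compf1 -ps !compA hk. Qed.

Lemma mono_of_retraction (X Y Z : C) (s : Hom X Y) (r : Hom Y X) (h k : Hom Z X) :
  r · s = idm X -> s · h = s · k -> h = k.
Proof. by move=> rs hk; rewrite -[h]comp1f -[k]comp1f -rs -!compA hk. Qed.

Lemma postcomp2 (X Y Z W : C) (g : Hom Y Z) (f : Hom X Y) (k : Hom X Z)
    (x : Hom Z W) :
  g · f = k -> x · g · f = x · k.
Proof. by move=> <-; rewrite !compA. Qed.

Lemma postcomp3 (X Y Z V W : C) (h : Hom Z V) (g : Hom Y Z) (f : Hom X Y)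
    (k : Hom X V) (x : Hom V W) :
  h · g · f = k -> x · h · g · f = x · k.
Proof. by move=> <-; rewrite !compA. Qed.

Lemma postcomp4 (X Y Z V U W : C) (i : Hom V U) (h : Hom Z V) (g : Hom Y Z)
    (f : Hom X Y) (k : Hom X U) (x : Hom U W) :
  i · h · g · f = k -> x · i · h · g · f = x · k.
Proof. by move=> <-; rewrite !compA. Qed.

Lemma postcomp5 (X Y Z V U T W : C) (j : Hom U T) (i : Hom V U) (h : Hom Z V)
    (g : Hom Y Z) (f : Hom X Y) (k : Hom X T) (x : Hom T W) :
  j · i · h · g · f = k -> x · j · i · h · g · f = x · k.
Proof. by move=> <-; rewrite !compA. Qed.

End CategoryFacts.
Arguments postcomp2 {C X Y Z W g f k x} _.
Arguments postcomp3 {C X Y Z V W h g f k x} _.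
Arguments postcomp4 {C X Y Z V U W i h g f k x} _.
Arguments postcomp5 {C X Y Z V U T W j i h g f k x} _.

(* [chain_rw H] rewrites with an equation [H] whose left side is a left-nested
   composite of up to five morphisms, wherever that composite occurs as a
   segment of a longer left-nested composite. *)
Ltac chain_rw H :=
  rewrite ?compA;
  first [ rewrite (postcomp5 H) | rewrite (postcomp4 H) | rewrite (postcomp3 H)
        | rewrite (postcomp2 H) | rewrite H ];
  rewrite ?compA.

Section MonoidalFacts.
Context {C : Category} (M : MonData C) (HM : IsMonoidal M).
Local Notation "A ⊗ B" := (tens M A B) (at level 30, right associativity).
Local Notation "f ⊠ g" := (tensm M f g) (at level 30, right associativity).
Local Notation a := (assoc M).
Local Notation ai := (assoc_inv M).
Local Notation l := (lunit M).
Local Notation li := (lunit_inv M).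
Local Notation r := (runit M).
Local Notation ri := (runit_inv M).
Local Notation U := (munit M).

Lemma tensm1 (A B : C) : idm A ⊠ idm B = idm (A ⊗ B).
Proof. exact: (tens_id HM). Qed.

Lemma tensmM (A A' A'' B B' B'' : C) (f : Hom A A') (f' : Hom A' A'')
    (g : Hom B B') (g' : Hom B' B'') :
  (f' · f) ⊠ (g' · g) = (f' ⊠ g') · (f ⊠ g).
Proof. exact: (tens_comp HM). Qed.

Lemma tensmMl (A A' A'' B : C) (f : Hom A A') (f' : Hom A' A'') :
  (f' · f) ⊠ idm B = (f' ⊠ idm B) · (f ⊠ idm B).
Proof. by rewrite -tensmM comp1f. Qed.

Lemma tensmMr (A B B' B'' : C) (g : Hom B B') (g' : Hom B' B'') :
  idm A ⊠ (g' · g) = (idm A ⊠ g') · (idm A ⊠ g).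
Proof. by rewrite -tensmM comp1f. Qed.

Lemma tensm_interchange (A A' B B' : C) (f : Hom A A') (g : Hom B B') :
  (f ⊠ idm B') · (idm A ⊠ g) = (idm A' ⊠ g) · (f ⊠ idm B).
Proof. by rewrite -!tensmM !comp1f !compf1. Qed.

Lemma assocK (A B X : C) : a A B X · ai A B X = idm _.
Proof. exact: (assoc_iso2 HM). Qed.

Lemma assoc_invK (A B X : C) : ai A B X · a A B X = idm _.
Proof. exact: (assoc_iso1 HM). Qed.

Lemma runitK (A : C) : r A · ri A = idm _.
Proof. exact: (runit_iso2 HM). Qed.

Lemma assoc_natural (A A' B B' X X' : C) (f : Hom A A') (g : Hom B B')
    (h : Hom X X') :
  a A' B' X' · (f ⊠ (g ⊠ h)) = ((f ⊠ g) ⊠ h) · a A B X.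
Proof. exact: (assoc_nat HM). Qed.

Lemma assoc_inv_natural (A A' B B' X X' : C) (f : Hom A A') (g : Hom B B')
    (h : Hom X X') :
  ai A' B' X' · ((f ⊠ g) ⊠ h) = (f ⊠ (g ⊠ h)) · ai A B X.
Proof.
rewrite -[LHS]compf1 -(assocK A B X) !compA.
chain_rw (esym (assoc_natural f g h)).
by rewrite assoc_invK comp1f.
Qed.

Lemma lunit_natural (A A' : C) (f : Hom A A') : l A' · (idm U ⊠ f) = f · l A.
Proof. exact: (lunit_nat HM). Qed.

Lemma runit_natural (A A' : C) (f : Hom A A') : r A' · (f ⊠ idm U) = f · r A.
Proof. exact: (runit_nat HM). Qed.

Lemma lunit_inv_natural (A A' : C) (f : Hom A A') : li A' · f = (idm U ⊠ f) · li A.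
Proof.
rewrite -[LHS]compf1 -(lunit_iso2 HM A) compA.
chain_rw (esym (lunit_natural f)).
by rewrite (lunit_iso1 HM) comp1f.
Qed.

Lemma runit_inv_natural (A A' : C) (f : Hom A A') : ri A' · f = (f ⊠ idm U) · ri A.
Proof.
rewrite -[LHS]compf1 -(runitK A) compA.
chain_rw (esym (runit_natural f)).
by rewrite (runit_iso1 HM) comp1f.
Qed.

Lemma assoc_epi (A B X W : C) (f g : Hom ((A ⊗ B) ⊗ X) W) :
  f · a A B X = g · a A B X -> f = g.
Proof. exact: epi_of_section (assocK A B X). Qed.

Lemma assoc_mono (A B X W : C) (f g : Hom W (A ⊗ (B ⊗ X))) :
  a A B X · f = a A B X · g -> f = g.
Proof. exact: mono_of_retraction (assoc_invK A B X). Qed.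

Lemma tensm_assoc_epi (A B X Y W : C) (f g : Hom (A ⊗ ((B ⊗ X) ⊗ Y)) W) :
  f · (idm A ⊠ a B X Y) = g · (idm A ⊠ a B X Y) -> f = g.
Proof.
by apply: (epi_of_section (s := idm A ⊠ ai B X Y)); rewrite -tensmMr assocK tensm1.
Qed.

Lemma tensm_lunit_inj (A B : C) (f g : Hom A B) : idm U ⊠ f = idm U ⊠ g -> f = g.
Proof.
move=> fg; apply: (epi_of_section (lunit_iso2 HM A)).
by rewrite -!lunit_natural fg.
Qed.

Lemma tensm_runit_inj (A B : C) (f g : Hom A B) : f ⊠ idm U = g ⊠ idm U -> f = g.
Proof.
move=> fg; apply: (epi_of_section (runitK A)).
by rewrite -!runit_natural fg.
Qed.

Lemma lunit_tensor (A B : C) : (l A ⊠ idm B) · a U A B = l (A ⊗ B).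
Proof.
apply: tensm_lunit_inj; apply: assoc_mono; symmetry.
rewrite -(triangle HM) -{1}(tensm1 A B) compA.
chain_rw (assoc_natural (r U) (idm A) (idm B)).
chain_rw (pentagon HM U U A B).
chain_rw (esym (@tensmMl _ _ _ B (a U U A) (r U ⊠ idm A))).
rewrite (triangle HM).
chain_rw (esym (assoc_natural (idm U) (l A) (idm B))).
by rewrite tensmMr compA.
Qed.

Lemma runit_tensor (A B : C) : (idm A ⊠ r B) · ai A B U = r (A ⊗ B).
Proof.
have : r (A ⊗ B) · a A B U = idm A ⊠ r B.
  apply: tensm_runit_inj; apply: assoc_epi; apply: tensm_assoc_epi.
  rewrite tensmMl.
  chain_rw (esym (pentagon HM A B U U)).
  rewrite (triangle HM) -(tensm1 A B) (esym (assoc_natural (idm A) (idm B) (l U))).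
  rewrite -(triangle HM) tensmMr.
  by chain_rw (assoc_natural (idm A) (r B) (idm U)).
by move=> <-; rewrite -compA assocK compf1.
Qed.

Lemma triangle_inv (A B : C) : (idm A ⊠ l B) · ai A U B = r A ⊠ idm B.
Proof. by rewrite -(triangle HM) -compA assocK compf1. Qed.

Lemma pentagon_inv (A B X Y : C) :
  ai A B (X ⊗ Y) · ai (A ⊗ B) X Y · (a A B X ⊠ idm Y)
  = (idm A ⊠ ai B X Y) · ai A (B ⊗ X) Y.
Proof.
apply: assoc_epi; apply: tensm_assoc_epi.
rewrite -!compA (compA (a A B X ⊠ idm Y)) -(pentagon HM) !compA.
chain_rw (assoc_invK (A ⊗ B) X Y); rewrite compf1 assoc_invK.
chain_rw (assoc_invK A (B ⊗ X) Y).
by rewrite compf1 -tensmMr assoc_invK tensm1.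
Qed.

Lemma pentagon_assoc_inv (A B X Y : C) :
  ai (A ⊗ B) X Y · (a A B X ⊠ idm Y) · a A (B ⊗ X) Y
  = a A B (X ⊗ Y) · (idm A ⊠ ai B X Y).
Proof.
apply: tensm_assoc_epi.
chain_rw (esym (pentagon HM A B X Y)); rewrite assoc_invK comp1f.
by rewrite -compA -tensmMr assoc_invK tensm1 compf1.
Qed.


Lemma monoid_mulA_inv (X : C) (m : Hom (X ⊗ X) X) (u : Hom U X) :
  is_monoid M X m u -> m · (m ⊠ idm X) = m · (idm X ⊠ m) · ai X X X.
Proof. by case=> mA _; rewrite -mA -compA assocK compf1. Qed.

Section FreeBimodule.
Variables (L : C) (mL : Hom (L ⊗ L) L) (uL : Hom U L).
Variables (B : C) (mB : Hom (B ⊗ B) B) (uB : Hom U B).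
Hypotheses (HL : is_monoid M L mL uL) (HB : is_monoid M B mB uB).

Lemma free_bimodule :
  is_bimodule M mL uL mB uB ((mL ⊠ idm B) · a L L B) ((idm L ⊠ mB) · ai L B B).
Proof.
have [mLA [mL1 _]] := HL; have [_ [_ mB1]] := HB.
split; [|split; [|split; [|split]]].
- rewrite tensmMr !compA.
  chain_rw (assoc_natural (idm L) mL (idm B)).
  chain_rw (esym (tensmMl B (idm L ⊠ mL) mL)).
  rewrite -mLA !tensmMl ?compA.
  chain_rw (esym (pentagon HM L L L B)).
  chain_rw (esym (assoc_natural mL (idm L) (idm B))).
  by rewrite tensm1.
- rewrite -compA -(tensm1 L B) assoc_natural compA -tensmMl mL1.
  exact: lunit_tensor.
- rewrite tensmMl !compA.
  chain_rw (assoc_inv_natural (idm L) mB (idm B)).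
  chain_rw (esym (tensmMr L (mB ⊠ idm B) mB)).
  rewrite (monoid_mulA_inv HB) !tensmMr ?compA.
  chain_rw (esym (pentagon_inv L B B B)).
  chain_rw (esym (tensmMl B (ai L B B) (a L B B))).
  rewrite assocK tensm1 compf1; chain_rw (assoc_invK (L ⊗ B) B B).
  rewrite compf1 -(tensm1 L B).
  by chain_rw (assoc_inv_natural (idm L) (idm B) mB).
- rewrite -compA -(tensm1 L B) assoc_inv_natural compA -tensmMr mB1.
  exact: runit_tensor.
- rewrite tensmMl tensmMr !compA.
  chain_rw (assoc_inv_natural mL (idm B) (idm B)); rewrite tensm1.
  chain_rw (esym (tensm_interchange mL mB)).
  chain_rw (pentagon_assoc_inv L L B B).
  rewrite -(tensm1 L L).
  by chain_rw (esym (assoc_natural (idm L) (idm L) mB)).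
Qed.

End FreeBimodule.

Section Retract.
Variables (L : C) (mL : Hom (L ⊗ L) L) (uL : Hom U L).
Variables (B : C) (mB : Hom (B ⊗ B) B) (uB : Hom U B).
Variables (X : C) (lam : Hom (L ⊗ X) X) (rho : Hom (X ⊗ B) X).
Variables (R : C) (p : Hom X R) (i : Hom R X).
Hypotheses (HX : is_bimodule M mL uL mB uB lam rho) (p_i : p · i = idm R).
Hypothesis lam_absorb : i · p · lam · (idm L ⊠ (i · p)) = i · p · lam.
Hypothesis rho_absorb : i · p · rho · ((i · p) ⊠ idm B) = i · p · rho.

Lemma retract_precomp (Y : C) (h k : Hom Y X) : i · p · h = i · p · k -> p · h = p · k.
Proof.
by move=> /(f_equal (fun f => p · f)); rewrite !compA p_i !comp1f.
Qed.

Lemma retract_bimodule :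
  is_bimodule M mL uL mB uB (p · lam · (idm L ⊠ i)) (p · rho · (i ⊠ idm B)).
Proof.
have plam : p · lam · (idm L ⊠ (i · p)) = p · lam.
  by rewrite -compA; apply: retract_precomp; rewrite !compA.
have prho : p · rho · ((i · p) ⊠ idm B) = p · rho.
  by rewrite -compA; apply: retract_precomp; rewrite !compA.
have [lamA [lam1 [rhoA [rho1 lam_rho]]]] := HX.
split; [|split; [|split; [|split]]].
- rewrite !tensmMr ?compA.
  chain_rw (esym (tensmMr L p i)); chain_rw plam.
  chain_rw (esym lamA).
  chain_rw (assoc_natural (idm L) (idm L) i); rewrite tensm1.
  by chain_rw (tensm_interchange mL i).
- chain_rw (esym (tensm_interchange uL i)).
  chain_rw lam1; chain_rw (lunit_natural i).
  by rewrite p_i comp1f.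
- rewrite !tensmMl ?compA.
  chain_rw (esym (tensmMl B p i)); chain_rw prho.
  chain_rw (esym (assoc_natural i (idm B) (idm B))); rewrite tensm1.
  chain_rw rhoA.
  by chain_rw (tensm_interchange i mB).
- chain_rw (tensm_interchange i uB).
  chain_rw rho1; chain_rw (runit_natural i).
  by rewrite p_i comp1f.
- rewrite !tensmMl !tensmMr ?compA.
  chain_rw (esym (tensmMl B p i)); chain_rw prho.
  chain_rw (esym (tensmMr L p i)); chain_rw plam.
  chain_rw (esym (assoc_natural (idm L) i (idm B))).
  by chain_rw lam_rho.
Qed.

End Retract.

End MonoidalFacts.

Section SqcapR.
Context {C : Category} (D : Duoidal C).
Local Notation "A ∘ B" := (tens (mc D) A B) (at level 30, right associativity).
Local Notation "f ⊚ g" := (tensm (mc D) f g) (at level 30, right associativity).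
Local Notation "A • B" := (tens (mb D) A B) (at level 30, right associativity).
Local Notation "f ⊙ g" := (tensm (mb D) f g) (at level 30, right associativity).
Local Notation I := (munit (mc D)).
Local Notation J := (munit (mb D)).
Local Notation ac := (assoc (mc D)).
Local Notation aci := (assoc_inv (mc D)).
Local Notation rc := (runit (mc D)).
Local Notation rci := (runit_inv (mc D)).
Local Notation rb := (runit (mb D)).
Local Notation lbi := (lunit_inv (mb D)).
Local Notation zt := (zeta D).
Local Notation vp := (varpi D).

Let HD : IsDuoidal D := duo_ax D.
Let HC : IsMonoidal (mc D) := duo_mc HD.
Let HB : IsMonoidal (mb D) := duo_mb HD.

Variables (A : C) (mu : Hom (A ∘ A) A) (eta : Hom I A).
Variables (Delta : Hom A (A • A)) (eps : Hom A J).
Hypothesis HA : right_weak_bimonoid mu eta Delta eps.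

Local Notation e := (e_of eta Delta).
Local Notation sqcap := (sqcapR mu eta Delta eps).
Local Notation lact_free := ((vp ⊚ idm A) · ac J J A).
Local Notation ract_free := ((idm J ⊚ mu) · aci J A A).

Definition varpi_mubar : Hom ((J ∘ A) ∘ A) J := vp · (idm J ⊚ (eps · mu)) · aci J A A.

Definition contract (X : C) (f : Hom (X ∘ A) J) : Hom (X ∘ (A • A)) (J ∘ A) :=
  rb (J ∘ A) · (idm (J ∘ A) ⊙ f) · zt J X A A · (lbi X ⊚ idm (A • A)).

Lemma contract_natural (X X' : C) (f : Hom (X ∘ A) J) (g : Hom X' X) :
  contract f · (g ⊚ idm (A • A)) = contract (f · (g ⊚ idm A)).
Proof.
rewrite /contract -compA -(tensmMl HC) (lunit_inv_natural HB) (tensmMl HC) compA.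
rewrite -(tensm1 HB A A).
chain_rw (zeta_nat HD (idm J) g (idm A) (idm A)).
by rewrite (tensm1 HC) (tensm1 HB) (tensmMr HB) ?compA.
Qed.

Lemma sqcapR_contract : sqcap = contract varpi_mubar · (idm (J ∘ A) ⊚ e) · rci (J ∘ A).
Proof. by rewrite /sqcapR /contract /varpi_mubar /mubar !(tensmMr HB) ?compA. Qed.

Lemma sqcapR_comp (X : C) (h : Hom X (J ∘ A)) :
  sqcap · h = contract (varpi_mubar · (h ⊚ idm A)) · (idm X ⊚ e) · rci X.
Proof.
rewrite sqcapR_contract -compA (runit_inv_natural HC) ?compA.
chain_rw (esym (tensm_interchange HC h e)).
by rewrite contract_natural.
Qed.

Lemma LLC_contract :
  varpi_mubar · ((contract varpi_mubar · (idm (J ∘ A) ⊚ Delta)) ⊚ idm A)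
    · ac (J ∘ A) A A · ac J A (A ∘ A)
  = vp · (idm J ⊚ eps) · (idm J ⊚ mu) · (idm J ⊚ (idm A ⊚ mu)).
Proof.
have [_ [_ [_ [_ [_ [_ LLC]]]]]] := HA.
rewrite -LLC /varpi_mubar /contract /mubar.
by rewrite !(tensmMl HC) !(tensmMr HB) !(tensmMl HC) ?compA.
Qed.

(* Writing e = Δ·η, axiom (LLC) turns the left side into ψ precomposed with
   μ·(η∘A) on the last two factors, and the unit law of A removes it. *)
Lemma varpi_mubar_sqcapR : varpi_mubar · (sqcap ⊚ idm A) = varpi_mubar.
Proof.
have [[_ [mu1 _]] _] := HA.
have -> : varpi_mubar · (sqcap ⊚ idm A)
    = varpi_mubar · ((contract varpi_mubar · (idm (J ∘ A) ⊚ Delta)) ⊚ idm A)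
      · ac (J ∘ A) A A · ac J A (A ∘ A) · aci J A (A ∘ A) · aci (J ∘ A) A A
      · (((idm (J ∘ A) ⊚ eta) · rci (J ∘ A)) ⊚ idm A).
  chain_rw (assocK HC J A (A ∘ A)); rewrite compf1.
  chain_rw (assocK HC (J ∘ A) A A); rewrite compf1.
  by rewrite sqcapR_contract /e_of (tensmMr HC) ?compA !(tensmMl HC) ?compA.
chain_rw LLC_contract.
rewrite (tensmMl HC); chain_rw (assoc_inv_natural HC (idm (J ∘ A)) eta (idm A)).
rewrite -[idm (J ∘ A)](tensm1 HC).
chain_rw (assoc_inv_natural HC (idm J) (idm A) (eta ⊚ idm A)).
chain_rw (esym (tensmMr HC J (idm A ⊚ (eta ⊚ idm A)) (idm A ⊚ mu))).
rewrite -(tensmMr HC A) mu1.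
chain_rw (esym (assoc_inv_natural HC (idm J) (idm A) (lunit (mc D) A))).
rewrite (tensm1 HC J A); chain_rw (triangle_inv HC (J ∘ A) A).
chain_rw (esym (tensmMl HC A (rci (J ∘ A)) (rc (J ∘ A)))).
by rewrite (runitK HC) (tensm1 HC) compf1 /varpi_mubar (tensmMr HC) ?compA.
Qed.

Lemma varpi_mubar_lact :
  varpi_mubar · (lact_free ⊚ idm A) = vp · (idm J ⊚ varpi_mubar) · aci J (J ∘ A) A.
Proof.
have [vpA _] := J_monoid HD.
rewrite /varpi_mubar (tensmMl HC) ?compA.
chain_rw (assoc_inv_natural HC vp (idm A) (idm A)); rewrite (tensm1 HC A A).
chain_rw (esym (tensm_interchange HC vp (eps · mu))).
rewrite (monoid_mulA_inv HC (J_monoid HD)) -(tensm1 HC J J).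
chain_rw (assoc_inv_natural HC (idm J) (idm J) (eps · mu)).
chain_rw (pentagon_inv HC J J A A).
by rewrite !(tensmMr HC) ?compA.
Qed.

Lemma varpi_mubar_ract :
  varpi_mubar · (ract_free ⊚ idm A)
  = varpi_mubar · (idm (J ∘ A) ⊚ mu) · aci (J ∘ A) A A.
Proof.
have [A_monoid _] := HA.
rewrite /varpi_mubar -[idm (J ∘ A)](tensm1 HC) (tensmMl HC) ?compA.
chain_rw (assoc_inv_natural HC (idm J) mu (idm A)).
chain_rw (esym (tensmMr HC J (mu ⊚ idm A) (eps · mu))).
chain_rw (monoid_mulA_inv HC A_monoid).
chain_rw (assoc_inv_natural HC (idm J) (idm A) mu).
rewrite !(tensmMr HC) ?compA.
chain_rw (esym (pentagon_inv HC J A A A)).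
chain_rw (esym (tensmMl HC A (aci J A A) (ac J A A))).
by rewrite (assocK HC) (tensm1 HC) compf1.
Qed.

Lemma sqcapR_lact_absorb : sqcap · lact_free · (idm J ⊚ sqcap) = sqcap · lact_free.
Proof.
rewrite -compA !sqcapR_comp; congr (contract _ · _ · _).
rewrite (tensmMl HC) compA !varpi_mubar_lact.
chain_rw (assoc_inv_natural HC (idm J) sqcap (idm A)).
chain_rw (esym (tensmMr HC J (sqcap ⊚ idm A) varpi_mubar)).
by rewrite varpi_mubar_sqcapR.
Qed.

Lemma sqcapR_ract_absorb : sqcap · ract_free · (sqcap ⊚ idm A) = sqcap · ract_free.
Proof.
rewrite -compA !sqcapR_comp; congr (contract _ · _ · _).
rewrite (tensmMl HC) compA !varpi_mubar_ract.
chain_rw (assoc_inv_natural HC sqcap (idm A) (idm A)); rewrite (tensm1 HC A A).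
chain_rw (esym (tensm_interchange HC sqcap mu)).
by chain_rw varpi_mubar_sqcapR.
Qed.

End SqcapR.

Theorem lemma3p3 (C : Category) (D : Duoidal C)
  (Hsplit : idempotents_split C)
  (A : C) (mu : Hom (tens (mc D) A A) A) (eta : Hom (munit (mc D)) A)
  (Delta : Hom A (tens (mb D) A A)) (eps : Hom A (munit (mb D)))
  (HA : right_weak_bimonoid mu eta Delta eps)
  (R : C) (piR : Hom (tens (mc D) (munit (mb D)) A) R)
  (iotaR : Hom R (tens (mc D) (munit (mb D)) A))
  (Hsplit1 : iotaR · piR = sqcapR mu eta Delta eps)
  (Hsplit2 : piR · iotaR = idm R) :
  is_bimodule (mc D) (varpi D) (tau D) mu eta
    (lactR piR iotaR) (ractR mu piR iotaR).
Proof.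
have [A_monoid _] := HA.
have HC := duo_mc (duo_ax D).
have free := free_bimodule HC (J_monoid (duo_ax D)) A_monoid.
have := retract_bimodule HC free Hsplit2.
rewrite Hsplit1 => /(_ (sqcapR_lact_absorb HA) (sqcapR_ract_absorb HA)).
by rewrite /lactR /ractR !compA.
Qed.
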